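(* Let $\mathcal{L}$ be a set closed under a unary connective $\neg$, and let $\mathcal{C}: 2^{\mathcal{L}}\to 2^{\mathcal{L}}$ be a C-logics satisfying Weak Compactness, $\neg$-R1 and $\neg$-R2. If $A\subseteq\mathcal{L}$, $a\in\mathcal{L}$ and $a\notin\mathcal{C}(A)$, then there is a maximal consistent set $B\supseteq A$ such that $a\notin B$.
   Context: A C-logics is a map $\mathcal{C}: 2^{\mathcal{L}}\to 2^{\mathcal{L}}$ satisfying Inclusion ($A\subseteq\mathcal{C}(A)$) and Cumulativity ($A\subseteq B\subseteq\mathcal{C}(A)\Rightarrow\mathcal{C}(A)=\mathcal{C}(B)$). Weak Compactness: if $\mathcal{C}(A)=\mathcal{L}$ then $\mathcal{C}(B)=\mathcal{L}$ for some finite $B\subseteq A$. $\neg$-R1: $\mathcal{C}(A\cup\{a,\neg a\})=\mathcal{L}$. $\neg$-R2: if $\mathcal{C}(A\cup\{\neg a\})=\mathcal{L}$ then $a\in\mathcal{C}(A)$ (for all $A\subseteq\mathcal{L}$, $a\in\mathcal{L}$). $A$ is consistent iff $\mathcal{C}(A)\neq\mathcal{L}$; maximal consistent iff consistent and every strict superset in $\mathcal{L}$ is inconsistent. *)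

From Stdlib Require Import List.

Definition lset (L : Type) := L -> Prop.

Definition subset {L : Type} (A B : lset L) : Prop := forall x, A x -> B x.
Definition set_eq {L : Type} (A B : lset L) : Prop := forall x, A x <-> B x.
Definition full {L : Type} : lset L := fun _ => True.
Definition union {L : Type} (A B : lset L) : lset L := fun x => A x \/ B x.
Definition sing {L : Type} (a : L) : lset L := fun x => x = a.
Definition pair2 {L : Type} (a b : L) : lset L := fun x => x = a \/ x = b.

Definition finite_set {L : Type} (B : lset L) : Prop :=
  exists l : list L, forall x, B x <-> In x l.

Definition inclusion {L : Type} (C : lset L -> lset L) : Prop :=
  forall A, subset A (C A).
Definition cumulativity {L : Type} (C : lset L -> lset L) : Prop :=
  forall A B, subset A B -> subset B (C A) -> set_eq (C A) (C B).
Definition C_logic {L : Type} (C : lset L -> lset L) : Prop :=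
  inclusion C /\ cumulativity C.

Definition weak_compactness {L : Type} (C : lset L -> lset L) : Prop :=
  forall A, set_eq (C A) full ->
    exists B, finite_set B /\ subset B A /\ set_eq (C B) full.

Definition neg_R1 {L : Type} (neg : L -> L) (C : lset L -> lset L) : Prop :=
  forall A a, set_eq (C (union A (pair2 a (neg a)))) full.

Definition neg_R2 {L : Type} (neg : L -> L) (C : lset L -> lset L) : Prop :=
  forall A a, set_eq (C (union A (sing (neg a)))) full -> C A a.

Definition consistent {L : Type} (C : lset L -> lset L) (A : lset L) : Prop :=
  ~ set_eq (C A) full.

Definition maximal_consistent {L : Type} (C : lset L -> lset L) (A : lset L) : Prop :=
  consistent C A /\
  forall B, subset A B -> ~ subset B A -> ~ consistent C B.

(** By ¬-R2, adding ¬a to A keeps it consistent. Weak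
    Compactness makes consistency (relative to a fixed base set) survive unions
    of chains, so Zorn's lemma extends A ∪ {¬a} to a maximal consistent set B.
    By ¬-R1, a consistent set cannot contain both ¬a and a, so a ∉ B. *)
From Stdlib Require Import List.
From mathcomp Require classical_sets.

Definition empty {L : Type} : lset L := fun _ => False.

Definition bigunion {L : Type} (F : lset (lset L)) : lset L :=
  fun x => exists2 X, F X & X x.

Definition chain {L : Type} (F : lset (lset L)) : Prop :=
  forall X Y, F X -> F Y -> subset X Y \/ subset Y X.

Lemma chain_list_bound {L : Type} (F : lset (lset L)) (A0 : lset L) :
  chain F -> forall l : list L,
  (forall x, In x l -> union A0 (bigunion F) x) ->
  exists Z, (Z = empty \/ F Z) /\ forall x, In x l -> union A0 Z x.
Proof.
  intros HF l; induction l as [|y l IH]; intros Hl.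
  - exists empty. split; [now left | intros x []].
  - destruct IH as [Z [HZ HZl]]; [intros x Hx; apply Hl; now right|].
    destruct (Hl y (or_introl eq_refl)) as [Hy | [Y FY HY]].
    + exists Z. split; [exact HZ|]. intros x [<- | Hx]; [now left | auto].
    + assert (HZY : subset Z Y \/ subset Y Z).
      { destruct HZ as [-> | HZ]; [left; intros x []|exact (HF Z Y HZ FY)]. }
      destruct HZY as [HZY | HYZ].
      * exists Y. split; [now right|].
        intros x [<- | Hx]; [now right|].
        destruct (HZl x Hx); [now left | right; auto].
      * exists Z. split; [exact HZ|].
        intros x [<- | Hx]; [right; auto | auto].
Qed.

Section Consistency.

Variables (L : Type) (C : lset L -> lset L).
Hypothesis cumulC : cumulativity C.

Lemma consistent_subset (X Y : lset L) :
  subset X Y -> consistent C Y -> consistent C X.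
Proof.
  intros HXY HY HX. apply HY. intros z. split; [intros _; exact I|intros _].
  assert (HYX : subset Y (C X)) by (intros y _; apply HX; exact I).
  apply (cumulC X Y HXY HYX z), HX. exact I.
Qed.

Hypothesis compactC : weak_compactness C.

Lemma consistent_chain_union (A0 : lset L) (F : lset (lset L)) :
  consistent C A0 -> chain F ->
  (forall X, F X -> consistent C (union A0 X)) ->
  consistent C (union A0 (bigunion F)).
Proof.
  intros HA0 HF HFc Hinc.
  destruct (compactC _ Hinc) as [B [[l Hl] [HBsub HB]]].
  destruct (chain_list_bound F A0 HF l) as [Z [HZ HlZ]].
  { intros x Hx. apply HBsub, Hl, Hx. }
  assert (HZc : consistent C (union A0 Z)).
  { destruct HZ as [-> | HZ]; [|exact (HFc Z HZ)].
    apply (consistent_subset _ A0); [intros x [Hx | []]; exact Hx | exact HA0]. }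
  apply (consistent_subset B (union A0 Z)); [|exact HZc|exact HB].
  intros x Hx. apply HlZ, Hl, Hx.
Qed.

(* Zorn is applied to the sets X with A0 ∪ X consistent rather than to the
   consistent supersets of A0, so that the empty chain is no exception. *)
Lemma exists_maximal_consistent_superset (A0 : lset L) :
  consistent C A0 -> exists B, subset A0 B /\ maximal_consistent C B.
Proof.
  intros HA0.
  destruct (@classical_sets.Zorn_bigcup L (fun X : lset L => consistent C (union A0 X)))
    as [A [HA Amax]].
  { intros F HFP HF. exact (consistent_chain_union A0 F HA0 HF HFP). }
  exists (union A0 A). split; [intros x Hx; now left|split; [exact HA|]].
  intros Y HAY HYA HY. apply (Amax Y).
  - split; [intros x Hx; apply HAY; now right|].
    intros HYA'. apply HYA. intros x Hx. right. exact (HYA' x Hx).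
  - apply (consistent_subset _ Y); [|exact HY].
    intros x [Hx | Hx]; [apply HAY; now left | exact Hx].
Qed.

End Consistency.

Section Negation.

Variables (L : Type) (neg : L -> L) (C : lset L -> lset L).

Lemma consistent_add_neg (A : lset L) (a : L) :
  neg_R2 neg C -> ~ C A a -> consistent C (union A (sing (neg a))).
Proof. intros R2 Ha Hinc. exact (Ha (R2 A a Hinc)). Qed.

Lemma consistent_neg_not_mem (B : lset L) (a : L) :
  cumulativity C -> neg_R1 neg C -> consistent C B -> B (neg a) -> ~ B a.
Proof.
  intros cumulC R1 HB Hna Ha.
  apply (consistent_subset L C cumulC (union B (pair2 a (neg a))) B);
    [|exact HB|exact (R1 B a)].
  intros x [Hx | [-> | ->]]; assumption.
Qed.

End Negation.

Theorem lemma14 (L : Type) (neg : L -> L) (C : lset L -> lset L) :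
  C_logic C -> weak_compactness C -> neg_R1 neg C -> neg_R2 neg C ->
  forall (A : lset L) (a : L), ~ C A a ->
    exists B : lset L, subset A B /\ maximal_consistent C B /\ ~ B a.
Proof.
  intros [_ cumulC] compactC R1 R2 A a Ha.
  destruct (exists_maximal_consistent_superset L C cumulC compactC
              (union A (sing (neg a))) (consistent_add_neg L neg C A a R2 Ha))
    as [B [HAB HBmax]].
  exists B. split; [intros x Hx; apply HAB; now left|split; [exact HBmax|]].
  apply (consistent_neg_not_mem L neg C B a cumulC R1 (proj1 HBmax)).
  apply HAB. now right.
Qed.
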